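(* Let $\boldsymbol{\lambda}=(\lambda_1,\dots,\lambda_n)$ be a vector of positive integers and let $(a_1,\dots,a_n,d)$ be a minimal generator of $M(\boldsymbol{\lambda})$ of type (3) or (4). Then $0\le a_i<\lambda_i$ for all $i=1,\dots,n$.
   Context: $M(\boldsymbol{\lambda})=\{(a_1,\dots,a_n,d)\in\mathbb{N}^{n+1}\mid a_1/\lambda_1+\cdots+a_n/\lambda_n\ge d\}$. A minimal generator of $M(\boldsymbol{\lambda})$ is a nonzero element that cannot be written as the sum of two nonzero elements of $M(\boldsymbol{\lambda})$. A minimal generator $(a_1,\dots,a_n,d)$ is of type (3) if $a_n=0$, $d>0$ and $a_ia_j>0$ for some $1\le i<j<n$; it is of type (4) if $d>0$ and $a_ia_n>0$ for some $1\le i<n$. *)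

From mathcomp Require Import all_boot all_order all_algebra.
Set Implicit Arguments. Unset Strict Implicit. Unset Printing Implicit Defensive.
Import Order.TTheory GRing.Theory Num.Theory.

(* Elements of N^{n+1} are pairs (a, d) with a : {ffun 'I_n -> nat} (indices
   1..n of the paper are 0..n-1 here, so a_n is a at index n-1) and d : nat. *)
Definition elt (n : nat) := ({ffun 'I_n -> nat} * nat)%type.

Definition inM (n : nat) (lam : 'I_n -> nat) (x : elt n) : Prop :=
  ((x.2)%:R <= \sum_(i < n) ((x.1 i)%:R / (lam i)%:R) :> rat)%R.

Definition elt_zero (n : nat) (x : elt n) : Prop :=
  (forall i, x.1 i = 0%N) /\ x.2 = 0%N.

Definition elt_add (n : nat) (x y : elt n) : elt n :=
  ([ffun i => (x.1 i + y.1 i)%N], (x.2 + y.2)%N).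

Definition minimal_generator (n : nat) (lam : 'I_n -> nat) (x : elt n) : Prop :=
  inM lam x /\ ~ elt_zero x /\
  ~ (exists y z : elt n, inM lam y /\ inM lam z /\ ~ elt_zero y /\ ~ elt_zero z
       /\ x = elt_add y z).

Definition is_last (n : nat) (j : 'I_n) : Prop := nat_of_ord j = n.-1.

Definition type3 (n : nat) (x : elt n) : Prop :=
  (forall j : 'I_n, is_last j -> x.1 j = 0%N) /\ (0 < x.2)%N /\
  exists i j : 'I_n, (i < j)%N /\ (j < n.-1)%N /\ (0 < x.1 i * x.1 j)%N.

Definition type4 (n : nat) (x : elt n) : Prop :=
  (0 < x.2)%N /\
  exists i j : 'I_n, is_last j /\ (i < j)%N /\ (0 < x.1 i * x.1 j)%N.

From mathcomp Require Import all_boot all_order all_algebra.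
Import Order.TTheory GRing.Theory Num.Theory.

(* If a_k >= lambda_k and d > 0, then x splits off the element lambda_k e_k + e_{n+1}
   of M(lambda), whose weight is exactly its last coordinate, so the remainder stays
   in M(lambda); a second nonzero coordinate a_q makes the remainder nonzero, which
   contradicts minimality.  Generators of type (3) and (4) have d > 0 and two
   nonzero coordinates among a_1, ..., a_n, so every coordinate can be bounded this way. *)

Local Open Scope ring_scope.

Section Weight.

Variables (n : nat) (lam : 'I_n -> nat).

Definition weight (a : {ffun 'I_n -> nat}) : rat :=
  \sum_(i < n) (a i)%:R / (lam i)%:R.

Lemma weight_add (y z : elt n) :
  weight (elt_add y z).1 = weight y.1 + weight z.1.
Proof.
by rewrite -big_split; apply: eq_bigr => i _; rewrite ffunE natrD mulrDl.
Qed.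

Lemma inM_addl_tight (y z : elt n) :
  weight y.1 = (y.2)%:R -> inM lam (elt_add y z) -> inM lam z.
Proof.
by rewrite /inM -/(weight _) weight_add /= natrD => ->; rewrite lerD2l.
Qed.

Definition lam_unit (k : 'I_n) : elt n :=
  ([ffun j => if j == k then lam k else 0%N], 1%N).

Lemma weight_lam_unit (k : 'I_n) : (0 < lam k)%N -> weight (lam_unit k).1 = 1.
Proof.
move=> lam_k_gt0; rewrite /weight (bigD1 k) //= big1 => [|i /negPf ik].
  by rewrite ffunE eqxx addr0 divff // pnatr_eq0 -lt0n.
by rewrite ffunE ik mul0r.
Qed.

Lemma inM_lam_unit (k : 'I_n) : (0 < lam k)%N -> inM lam (lam_unit k).
Proof. by move=> lam_k_gt0; rewrite /inM -/(weight _) weight_lam_unit. Qed.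

Lemma minimal_generator_coord_lt (a : {ffun 'I_n -> nat}) (d : nat) (k q : 'I_n) :
  (0 < lam k)%N -> (0 < d)%N -> q != k -> (0 < a q)%N ->
  minimal_generator lam (a, d) -> (a k < lam k)%N.
Proof.
move=> lam_k_gt0 d_gt0 qk a_q_gt0 [x_in [_ not_split]].
rewrite ltnNge; apply/negP => lam_le_ak; apply: not_split.
pose z : elt n := ([ffun j => if j == k then a k - lam k else a j]%N, d.-1).
have x_eq : (a, d) = elt_add (lam_unit k) z.
  congr pair; last by rewrite /= add1n prednK.
  by apply/ffunP => j; rewrite !ffunE; case: eqP => [->|]; [rewrite subnKC|].
exists (lam_unit k), z; split; [exact: inM_lam_unit|split].
  apply: (@inM_addl_tight (lam_unit k)); last by rewrite -x_eq.
  exact: weight_lam_unit.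
split; first by case=> /(_ k); rewrite ffunE eqxx => lam_k0; move: lam_k_gt0; rewrite lam_k0.
by split=> // -[/(_ q)]; rewrite ffunE (negPf qk) => a_q0; move: a_q_gt0; rewrite a_q0.
Qed.

End Weight.

Lemma type34_two_coords_gt0 (n : nat) (x : elt n) :
  type3 x \/ type4 x ->
  (0 < x.2)%N /\ exists p q : 'I_n, [/\ p != q, 0 < x.1 p & 0 < x.1 q]%N.
Proof.
case=> [[_ [d_gt0 [i [j [ij [_ aij]]]]]] | [d_gt0 [i [j [_ [ij aij]]]]]];
  split=> //; exists i, j; rewrite muln_gt0 in aij; case/andP: aij => ai aj;
  by split=> //; rewrite neq_ltn ij.
Qed.

Theorem lemma5p4 (n : nat) (lam : 'I_n -> nat) (x : elt n) :
  (forall i, 0 < lam i)%N ->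
  minimal_generator lam x ->
  type3 x \/ type4 x ->
  forall i : 'I_n, (x.1 i < lam i)%N.
Proof.
case: x => a d lam_gt0 mg /type34_two_coords_gt0 [d_gt0 [p [q [pq a_p_gt0 a_q_gt0]]]] k.
have [qk | qk] := eqVneq q k; last exact: minimal_generator_coord_lt (lam_gt0 k) d_gt0 qk a_q_gt0 mg.
have pk : p != k by rewrite -qk.
exact: minimal_generator_coord_lt (lam_gt0 k) d_gt0 pk a_p_gt0 mg.
Qed.
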